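(* For $L_2>0$ define $\bar h:\mathbb{R}^{3\times3}\to\mathbb{R}$ by $\bar h(R)=g(\|R^TR-I\|_F)$ with $g(x)=L_2\sqrt{3L_2^2x^2+1}-L_2$. Then: (i) there is a polynomial $q$ such that for every $L_2>0$, $\bar h$ is $q(L_2)$-curvature bounded; (ii) $\bar h$ is twice differentiable; (iii) its second derivatives are locally Lipschitz; and (v) $g$ is monotone in $|x|$, $\min_x g(x)=0$, and $g(x)=L_2$ when $|x|=1/L_2$.
   Context: $\|\cdot\|_F$ is the Frobenius norm; $R$ is identified with a vector in $\mathbb{R}^9$. A function $\phi$ is $L$-curvature bounded if $\phi(x)+\frac L2\|x\|^2$ is convex and $\nabla\phi$ is $L$-Lipschitz. *)

(* R : realType, matrices 'M[R]_3 with the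
   library's normed-module structure (all norms are equivalent in finite
   dimension, so differentiability notions do not depend on it); the
   Frobenius norm is defined explicitly below and used for all
   quantitative statements. *)
From HB Require Import structures.
From mathcomp Require Import all_boot all_order all_algebra.
From mathcomp Require Import all_classical all_reals all_analysis.
Set Implicit Arguments. Unset Strict Implicit. Unset Printing Implicit Defensive.
Import Order.TTheory GRing.Theory Num.Theory.
Import numFieldNormedType.Exports.
Local Open Scope ring_scope.

Section Defs.
Variable R : realType.

Definition frob (A : 'M[R]_3) : R :=
  Num.sqrt (\sum_(i < 3) \sum_(j < 3) A i j ^+ 2).

Definition gfun (L2 x : R) : R :=
  L2 * Num.sqrt (3 * L2 ^+ 2 * x ^+ 2 + 1) - L2.

Definition hbar (L2 : R) (X : 'M[R]_3) : R :=
  gfun L2 (frob (X^T *m X - 1%:M)).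

Definition convex_mx (f : 'M[R]_3 -> R) : Prop :=
  forall (x y : 'M[R]_3) (t : R), 0 <= t -> t <= 1 ->
    f (t *: x + (1 - t) *: y) <= t * f x + (1 - t) * f y.

Definition grad (f : 'M[R]_3 -> R) (x : 'M[R]_3) : 'M[R]_3 :=
  \matrix_(i, j) ('D_(delta_mx i j) f x).

Definition hess (f : 'M[R]_3 -> R) (x : 'M[R]_3) (i j k l : 'I_3) : R :=
  'D_(delta_mx k l) (fun y => grad f y i j) x.

Definition curvature_bounded (L : R) (f : 'M[R]_3 -> R) : Prop :=
  convex_mx (fun x => f x + L / 2 * frob x ^+ 2) /\
  (forall x, differentiable f x) /\
  (forall x y, frob (grad f x - grad f y) <= L * frob (x - y)).

Definition twice_differentiable (f : 'M[R]_3 -> R) : Prop :=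
  (forall x, differentiable f x) /\ (forall x, differentiable (grad f) x).

Definition hess_locally_lipschitz (f : 'M[R]_3 -> R) : Prop :=
  forall x : 'M[R]_3, exists r : R, exists K : R, 0 < r /\
    forall y z : 'M[R]_3, frob (y - x) < r -> frob (z - x) < r ->
      forall i j k l : 'I_3,
        `|hess f y i j k l - hess f z i j k l| <= K * frob (y - z).

End Defs.

(* Write E = X^T X - 1 and u = sqrt (3 L2^2 |E|^2 + 1) >= 1, so that hbar = L2 (u - 1) is
   smooth with gradient 6 L2^3 (X E) / u.  Since |X|^2 <= 3 + 3 |E| and L2 |E| <= u, the
   derivative of the gradient in direction V is bounded by (72 L2^3 + 78 L2^2) |V| uniformly
   in X.  By the mean value theorem the gradient is then globally Lipschitz with that
   constant, which makes the derivative of hbar + L/2 |.|^2 monotone along lines, i.e. this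
   function convex.  The entries of the Hessian are built from polynomials and from
   reciprocals and square roots of quantities >= 1, hence are Lipschitz on bounded sets. *)

From HB Require Import structures.
From mathcomp Require Import all_boot all_order all_algebra.
From mathcomp Require Import all_classical all_reals all_analysis.
From mathcomp Require Import ring lra.
Set Implicit Arguments. Unset Strict Implicit. Unset Printing Implicit Defensive.
Import Order.TTheory GRing.Theory Num.Theory.
Import numFieldNormedType.Exports.
Local Open Scope ring_scope.

Section Derivative.
Context {R : realType} {V : normedModType R}.
Implicit Types (f g : V -> R) (df dg : V -> V -> R).

Definition has_derivative f df :=
  forall x, differentiable f x /\ forall v, 'D_v f x = df x v.

Lemma has_derivative_congr f g df dg : f =1 g -> (forall x v, df x v = dg x v) ->
  has_derivative f df -> has_derivative g dg.
Proof.
move=> /funext <- E Hf x; have [? D] := Hf x.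
by split=> // v; rewrite D E.
Qed.

Lemma has_derivative_cst (a : R) : has_derivative (fun=> a) (fun _ _ => 0).
Proof. by move=> x; split=> [|v]; [exact: differentiable_cst|exact: derive_cst]. Qed.

Lemma has_derivativeD f g df dg : has_derivative f df -> has_derivative g dg ->
  has_derivative (f \+ g) (fun x v => df x v + dg x v).
Proof.
move=> Hf Hg x; have [fdiff Df] := Hf x; have [gdiff Dg] := Hg x.
split=> [|v]; first exact: differentiableD.
by rewrite deriveD ?Df ?Dg //; exact: diff_derivable.
Qed.

Lemma has_derivativeM f g df dg : has_derivative f df -> has_derivative g dg ->
  has_derivative (f \* g) (fun x v => f x * dg x v + g x * df x v).
Proof.
move=> Hf Hg x; have [fdiff Df] := Hf x; have [gdiff Dg] := Hg x.
split=> [|v]; first exact: differentiableM.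
by rewrite deriveM ?Df ?Dg //; exact: diff_derivable.
Qed.

Lemma has_derivativeZ (k : R) f df : has_derivative f df ->
  has_derivative (fun x => k * f x) (fun x v => k * df x v).
Proof.
move=> Hf; apply: has_derivative_congr (has_derivativeM (has_derivative_cst k) Hf) => //.
by move=> x v /=; rewrite mulr0 addr0.
Qed.

Lemma has_derivativeV f df : has_derivative f df -> (forall x, f x != 0) ->
  has_derivative (fun x => (f x)^-1) (fun x v => - (f x) ^- 2 * df x v).
Proof.
move=> Hf f_neq0 x; have [fdiff Df] := Hf x.
split=> [|v]; first exact: differentiableV.
by rewrite deriveV ?Df //; exact: diff_derivable.
Qed.

Lemma has_derivative_sqrt f df : has_derivative f df -> (forall x, 0 < f x) ->
  has_derivative (fun x => Num.sqrt (f x)) (fun x v => df x v / (2 * Num.sqrt (f x))).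
Proof.
move=> Hf f_gt0 x; have [fdiff Df] := Hf x.
have dsqrt : differentiable (@Num.sqrt R) (f x).
  by apply/derivable1_diffP; have [] := is_derive1_sqrt (f_gt0 x).
have dsqrtf : differentiable (Num.sqrt \o f) x by exact: differentiable_comp.
split=> // v; rewrite deriveE // diff_comp //= diff1E // derive1E derive_sqrt //.
by rewrite -deriveE // Df.
Qed.

Lemma has_derivative_sum n (F : 'I_n -> V -> R) dF :
  (forall i, has_derivative (F i) (dF i)) ->
  has_derivative (fun x => \sum_(i < n) F i x) (fun x v => \sum_(i < n) dF i x v).
Proof.
move=> HF x.
have -> : (fun x => \sum_(i < n) F i x) = \sum_(i < n) F i by rewrite fct_sumE.
split=> [|v]; first by apply: differentiable_sum => i; have [] := HF i x.
rewrite derive_sum => [|i]; last by have [di _] := HF i x; exact: diff_derivable.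
by apply: eq_bigr => i _; have [_ ->] := HF i x.
Qed.

Lemma has_derivative_line f df (a v : V) (t : R) : has_derivative f df ->
  is_derive t 1 (fun s : R => f (a + s *: v)) (df (a + t *: v) v).
Proof.
move=> Hf; pose l (s : R) := a + s *: v.
have dl : is_diff t l (fun r : R => 0 + r *: v) by exact: is_diffD.
have [fdiff Df] := Hf (l t).
have dfl : differentiable (f \o l) t by exact: differentiable_comp.
apply: DeriveDef; first exact: diff_derivable.
by rewrite deriveE // diff_comp //= diff_val /= add0r scale1r -deriveE.
Qed.

Lemma has_derivative_MVT f df (a v : V) (s t : R) :
  has_derivative f df -> s <= t ->
  exists2 c, c \in `[s, t] & f (a + t *: v) - f (a + s *: v) = (t - s) * df (a + c *: v) v.
Proof.
move=> Hf st.
have Hline r := has_derivative_line a v r Hf.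
have Hder (r : R) : derivable (fun u : R => f (a + u *: v)) r 1 by have [] := Hline r.
have [c cst ->] := MVT_segment st (fun r _ => Hline r)
  (derivable_within_continuous (fun r _ => Hder r)).
by exists c => //; rewrite mulrC.
Qed.

End Derivative.

Section MatrixDerivative.
Context {R : realType} {V : normedModType R}.

Definition has_derivative_mx m n (F : V -> 'M[R]_(m, n)) (dF : V -> V -> 'M[R]_(m, n)) :=
  forall i j, has_derivative (fun x => F x i j) (fun x v => dF x v i j).

Lemma has_derivative_mx_congr m n (F G : V -> 'M[R]_(m, n)) (dF dG : V -> V -> 'M[R]_(m, n)) :
  F =1 G -> (forall x v, dF x v = dG x v) ->
  has_derivative_mx F dF -> has_derivative_mx G dG.
Proof.
move=> /funext <- E HF i j.
by apply: has_derivative_congr (HF i j) => // x v; rewrite E.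
Qed.

Lemma has_derivative_mx_cst m n (A : 'M[R]_(m, n)) :
  has_derivative_mx (fun=> A) (fun _ _ => 0).
Proof.
move=> i j; apply: has_derivative_congr (has_derivative_cst (A i j)) => // x v.
by rewrite mxE.
Qed.

Lemma has_derivative_mxD m n (F G : V -> 'M[R]_(m, n)) (dF dG : V -> V -> 'M[R]_(m, n)) :
  has_derivative_mx F dF -> has_derivative_mx G dG ->
  has_derivative_mx (F \+ G) (fun x v => dF x v + dG x v).
Proof.
move=> HF HG i j; apply: has_derivative_congr (has_derivativeD (HF i j) (HG i j)).
  by move=> x; rewrite /= mxE.
by move=> x v; rewrite mxE.
Qed.

Lemma has_derivative_trmx m n (F : V -> 'M[R]_(m, n)) (dF : V -> V -> 'M[R]_(m, n)) :
  has_derivative_mx F dF -> has_derivative_mx (fun x => (F x)^T) (fun x v => (dF x v)^T).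
Proof.
move=> HF i j; apply: has_derivative_congr (HF j i).
  by move=> x; rewrite mxE.
by move=> x v; rewrite mxE.
Qed.

Lemma has_derivative_mulmx m n p (F : V -> 'M[R]_(m, n)) (G : V -> 'M[R]_(n, p)) dF dG :
  has_derivative_mx F dF -> has_derivative_mx G dG ->
  has_derivative_mx (fun x => F x *m G x) (fun x v => dF x v *m G x + F x *m dG x v).
Proof.
move=> HF HG i j.
apply: has_derivative_congr
  (has_derivative_sum (fun k => has_derivativeM (HF i k) (HG k j))).
  by move=> x; rewrite mxE.
move=> x v; rewrite !mxE -big_split /=.
by apply: eq_bigr => k _; ring.
Qed.

Lemma has_derivative_mxZ m n (f : V -> R) df (F : V -> 'M[R]_(m, n)) (dF : V -> V -> 'M[R]_(m, n)) :
  has_derivative f df -> has_derivative_mx F dF ->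
  has_derivative_mx (fun x => f x *: F x) (fun x v => df x v *: F x + f x *: dF x v).
Proof.
move=> Hf HF i j; apply: has_derivative_congr (has_derivativeM Hf (HF i j)).
  by move=> x; rewrite mxE.
by move=> x v; rewrite !mxE; ring.
Qed.

Lemma has_derivative_mx_differentiable m n (F : V -> 'M[R]_(m, n)) (dF : V -> V -> 'M[R]_(m, n)) x :
  has_derivative_mx F dF -> differentiable F x.
Proof.
move=> HF.
have -> : F = \sum_i \sum_j (fun y => F y i j *: delta_mx i j).
  apply/funext => y; rewrite fct_sumE {1}(matrix_sum_delta (F y)).
  by apply: eq_bigr => i _; rewrite fct_sumE.
apply: differentiable_sum => i; apply: differentiable_sum => j.
by apply: differentiableZl; have [] := HF i j x.
Qed.

End MatrixDerivative.

Lemma has_derivative_mx_id (R : realType) m n :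
  has_derivative_mx (@id 'M[R]_(m, n)) (fun _ v => v).
Proof.
move=> i j x; split=> [|v]; first exact: differentiable_coord.
have := derive_mx (@derivable_id _ _ x v); rewrite derive_id.
by move/(congr1 (fun A : 'M[R]_(m, n) => A i j)); rewrite mxE.
Qed.

Lemma sum_mul_sqr_le (R : realFieldType) (I : finType) (a b : I -> R) :
  (\sum_i a i * b i) ^+ 2 <= (\sum_i a i ^+ 2) * (\sum_i b i ^+ 2).
Proof.
set A := \sum_i a i ^+ 2; set B := \sum_i b i ^+ 2; set S := \sum_i a i * b i.
have A_ge0 : 0 <= A by apply: sumr_ge0 => i _; exact: sqr_ge0.
have [A0|A_neq0] := eqVneq A 0.
  have a0 i : a i = 0.
    by apply/eqP; rewrite -sqrf_eq0; apply/eqP/(psumr_eq0P (fun i _ => sqr_ge0 (a i)) A0).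
  by rewrite /S big1 ?expr0n ?A0 ?mul0r // => i _; rewrite a0 mul0r.
have lagrange : \sum_i (A * b i - S * a i) ^+ 2 = A * (A * B - S ^+ 2).
  transitivity (\sum_i (A ^+ 2 * b i ^+ 2 - (2 * A * S) * (a i * b i) + S ^+ 2 * a i ^+ 2)).
    by apply: eq_bigr => i _; ring.
  by rewrite big_split /= sumrB -!mulr_sumr -/A -/B -/S; ring.
have : 0 <= A * (A * B - S ^+ 2).
  by rewrite -lagrange; apply: sumr_ge0 => i _; exact: sqr_ge0.
by rewrite pmulr_rge0 ?subr_ge0 // lt_def A_neq0.
Qed.

Section Frobenius.
Variable R : realType.
Local Notation M := 'M[R]_3.
Implicit Types A B C : M.

Definition frob_dot A B : R := \sum_i \sum_j A i j * B i j.

Lemma frob_dotC A B : frob_dot A B = frob_dot B A.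
Proof. by apply: eq_bigr => i _; apply: eq_bigr => j _; rewrite mulrC. Qed.

Lemma frob_dotDl A B C : frob_dot (A + B) C = frob_dot A C + frob_dot B C.
Proof.
rewrite /frob_dot -big_split; apply: eq_bigr => i _.
by rewrite -big_split; apply: eq_bigr => j _; rewrite mxE mulrDl.
Qed.

Lemma frob_dotZl k A B : frob_dot (k *: A) B = k * frob_dot A B.
Proof.
rewrite /frob_dot mulr_sumr; apply: eq_bigr => i _.
by rewrite mulr_sumr; apply: eq_bigr => j _; rewrite mxE mulrA.
Qed.

Lemma frob_dotBl A B C : frob_dot (A - B) C = frob_dot A C - frob_dot B C.
Proof. by rewrite frob_dotDl -scaleN1r frob_dotZl mulN1r. Qed.

Lemma frob_dotDr A B C : frob_dot A (B + C) = frob_dot A B + frob_dot A C.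
Proof. by rewrite frob_dotC frob_dotDl !(frob_dotC A). Qed.

Lemma frob_dotZr k A B : frob_dot A (k *: B) = k * frob_dot A B.
Proof. by rewrite frob_dotC frob_dotZl frob_dotC. Qed.

Lemma frob_dotBr A B C : frob_dot A (B - C) = frob_dot A B - frob_dot A C.
Proof. by rewrite frob_dotC frob_dotBl !(frob_dotC A). Qed.

Lemma frob_dot_delta A i j : frob_dot A (delta_mx i j) = A i j.
Proof.
rewrite /frob_dot (bigD1 i) //= addrC big1 ?add0r => [|k ki]; last first.
  by apply: big1 => l _; rewrite mxE (negbTE ki) mulr0.
rewrite (bigD1 j) //= addrC big1 ?add0r => [|l lj]; last by rewrite mxE (negbTE lj) andbF mulr0.
by rewrite mxE !eqxx mulr1.
Qed.

Lemma frob_dot_trace A B : frob_dot A B = \tr (A^T *m B).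
Proof.
rewrite /frob_dot /mxtrace exchange_big; apply: eq_bigr => j _.
by rewrite mxE; apply: eq_bigr => i _; rewrite mxE.
Qed.

Lemma frob_dot_mulmx A B C : frob_dot A (B^T *m C) = frob_dot (B *m A) C.
Proof. by rewrite !frob_dot_trace trmx_mul mulmxA. Qed.

Lemma frobE A : frob A = Num.sqrt (frob_dot A A).
Proof.
by congr Num.sqrt; apply: eq_bigr => i _; apply: eq_bigr => j _; rewrite expr2.
Qed.

Lemma frob_dot_ge0 A : 0 <= frob_dot A A.
Proof. by do 2![apply: sumr_ge0 => ? _]; rewrite -expr2 sqr_ge0. Qed.

Lemma frob_sqr A : frob A ^+ 2 = frob_dot A A.
Proof. by rewrite frobE sqr_sqrtr ?frob_dot_ge0. Qed.

Lemma frob_ge0 A : 0 <= frob A.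
Proof. exact: sqrtr_ge0. Qed.

Lemma norm_frob_dot_le A B : `|frob_dot A B| <= frob A * frob B.
Proof.
rewrite -ler_sqr ?nnegrE ?mulr_ge0 ?frob_ge0 // real_normK ?num_real //.
rewrite exprMn !frob_sqr /frob_dot !pair_bigA /=.
exact: (sum_mul_sqr_le (fun p : 'I_3 * 'I_3 => A p.1 p.2) (fun p => B p.1 p.2)).
Qed.

Lemma frob_dot_le A B : frob_dot A B <= frob A * frob B.
Proof. exact: le_trans (ler_norm _) (norm_frob_dot_le A B). Qed.

Lemma frobD A B : frob (A + B) <= frob A + frob B.
Proof.
rewrite -ler_sqr ?nnegrE ?addr_ge0 ?frob_ge0 //.
rewrite frob_sqr sqrrD !frob_sqr frob_dotDl !frob_dotDr (frob_dotC B A).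
by have := frob_dot_le A B; lra.
Qed.

Lemma frobZ k A : frob (k *: A) = `|k| * frob A.
Proof.
by rewrite !frobE frob_dotZl frob_dotZr mulrA -expr2 sqrtrM ?sqr_ge0 // sqrtr_sqr.
Qed.

Lemma norm_entry_le_frob A i j : `|A i j| <= frob A.
Proof.
rewrite -ler_sqr ?nnegrE ?frob_ge0 // real_normK ?num_real // frob_sqr.
rewrite /frob_dot (bigD1 i) //= (bigD1 j) //= -expr2 -addrA lerDl.
by apply: addr_ge0; do ?[apply: sumr_ge0 => ? _]; rewrite -expr2 sqr_ge0.
Qed.

Lemma frob_tr A : frob A^T = frob A.
Proof.
rewrite /frob exchange_big; congr Num.sqrt.
by apply: eq_bigr => i _; apply: eq_bigr => j _; rewrite mxE.
Qed.

Lemma frob_mulmx A B : frob (A *m B) <= frob A * frob B.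
Proof.
rewrite -ler_sqr ?nnegrE ?mulr_ge0 ?frob_ge0 // exprMn !frob_sqr /frob_dot.
apply: (@le_trans _ _ (\sum_i \sum_j ((\sum_k A i k ^+ 2) * (\sum_k B k j ^+ 2)))).
  apply: ler_sum => i _; apply: ler_sum => j _; rewrite -expr2 mxE.
  exact: (sum_mul_sqr_le (fun k => A i k) (fun k => B k j)).
rewrite mulr_suml; apply: ler_sum => i _.
by rewrite -mulr_sumr exchange_big /=; under eq_bigr do rewrite expr2.
Qed.

Lemma has_derivative_frob_dot (V : normedModType R) (F G : V -> M) dF dG :
  has_derivative_mx F dF -> has_derivative_mx G dG ->
  has_derivative (fun x => frob_dot (F x) (G x))
    (fun x v => frob_dot (dF x v) (G x) + frob_dot (F x) (dG x v)).
Proof.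
move=> HF HG.
have := has_derivative_sum (fun i => has_derivative_sum (fun j => has_derivativeM (HF i j) (HG i j))).
apply: has_derivative_congr => // x v; rewrite /frob_dot -big_split; apply: eq_bigr => i _.
by rewrite -big_split; apply: eq_bigr => j _ /=; ring.
Qed.

End Frobenius.

Section MeanValue.
Variable R : realType.
Local Notation M := 'M[R]_3.

Lemma grad_frob_dot (f : M -> R) (G : M -> M) :
  has_derivative f (fun X V => frob_dot (G X) V) -> grad f = G.
Proof.
move=> Hf; apply/funext => X; apply/matrixP => i j.
by rewrite mxE; have [_ ->] := Hf X; exact: frob_dot_delta.
Qed.

Lemma lipschitz_of_derivative_bound (F : M -> M) dF (K : R) :
  has_derivative_mx F dF -> (forall X V, frob (dF X V) <= K * frob V) ->
  forall x y, frob (F x - F y) <= K * frob (x - y).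
Proof.
move=> HF dF_le x y; set w := F x - F y; set v := x - y.
(* Scalarize: the mean value theorem for [<w, F _>] on [y, x] gives [|w|^2 = <w, dF c v>]. *)
have Hpsi : has_derivative (fun X => frob_dot w (F X)) (fun X V => frob_dot w (dF X V)).
  apply: has_derivative_congr (has_derivative_frob_dot (has_derivative_mx_cst w) HF) => //.
  by move=> X V; rewrite -(scale0r 0) frob_dotZl mul0r add0r.
have [c _] := has_derivative_MVT y v Hpsi ler01.
have yv : y + v = x by rewrite addrC subrK.
rewrite subr0 mul1r scale1r scale0r addr0 yv -frob_dotBr -/w -frob_sqr.
move=> w2; apply: le_trans (dF_le (y + c *: v) v).
have [->|w_neq0] := eqVneq (frob w) 0; first exact: frob_ge0.
have w_gt0 : 0 < frob w by rewrite lt_def w_neq0 frob_ge0.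
by rewrite -(ler_pM2l w_gt0) -expr2 w2 frob_dot_le.
Qed.

Lemma convex_mx_of_monotone_derivative (f : M -> R) df : has_derivative f df ->
  (forall y v (s t : R), s <= t -> df (y + s *: v) v <= df (y + t *: v) v) ->
  convex_mx f.
Proof.
move=> Hf df_mono x y t t0 t1; set v := x - y.
have [c1 c1_in e1] := has_derivative_MVT y v Hf t0.
have [c2 c2_in e2] := has_derivative_MVT y v Hf t1.
move: c1_in c2_in; rewrite !in_itv /= => /andP[_ c1t] /andP[tc2 _].
have d12 := df_mono y v _ _ (le_trans c1t tc2).
have y1 : y + 1 *: v = x by rewrite scale1r addrC subrK.
have yt : y + t *: v = t *: x + (1 - t) *: y.
  by apply/matrixP => i j; rewrite /v !mxE; ring.
have : 0 <= t * (1 - t) * (df (y + c2 *: v) v - df (y + c1 *: v) v).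
  by rewrite !mulr_ge0 ?subr_ge0.
by move: e1 e2; rewrite scale0r addr0 y1 yt subr0; nra.
Qed.

Lemma curvature_bounded_of_lipschitz_grad (L : R) (f : M -> R) (G : M -> M) :
  has_derivative f (fun X V => frob_dot (G X) V) ->
  (forall x y, frob (G x - G y) <= L * frob (x - y)) ->
  curvature_bounded L f.
Proof.
move=> Hf G_lip; rewrite /curvature_bounded (grad_frob_dot Hf).
split; last by split=> // x; have [] := Hf x.
have Hsqr : has_derivative (fun X : M => frob X ^+ 2) (fun X V => frob_dot V X + frob_dot X V).
  have := has_derivative_frob_dot (@has_derivative_mx_id R 3 3) (@has_derivative_mx_id R 3 3).
  by apply: has_derivative_congr => // X; rewrite frob_sqr.
apply: convex_mx_of_monotone_derivative (has_derivativeD Hf (has_derivativeZ (L / 2) Hsqr)) _.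
move=> y v s t st /=; rewrite !(frob_dotC v).
have ts : (y + t *: v) - (y + s *: v) = (t - s) *: v.
  by rewrite opprD addrACA subrr add0r -scalerBl.
have dG := G_lip (y + t *: v) (y + s *: v).
rewrite ts frobZ ger0_norm ?subr_ge0 // in dG.
have := norm_frob_dot_le (G (y + t *: v) - G (y + s *: v)) v.
rewrite frob_dotBl => /ler_normlP[dGv _].
have dGv' : frob (G (y + t *: v) - G (y + s *: v)) * frob v <= L * ((t - s) * frob v) * frob v.
  by rewrite ler_wpM2r ?frob_ge0.
have dX : L * (frob_dot (y + t *: v) v - frob_dot (y + s *: v) v) = L * ((t - s) * frob v ^+ 2).
  by rewrite -frob_dotBl ts frob_dotZl frob_sqr.
nra.
Qed.

End MeanValue.

Section LipschitzOnBounded.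
Variable R : realType.
Local Notation M := 'M[R]_3.
Implicit Types f g : M -> R.

Definition lipschitz_on_bounded f := forall r : R, exists K : R, 0 <= K /\
  forall y z, frob y <= r -> frob z <= r -> `|f y - f z| <= K * frob (y - z).

Definition lipschitz_on_bounded_mx m n (F : M -> 'M[R]_(m, n)) :=
  forall i j, lipschitz_on_bounded (fun x => F x i j).

Lemma lipschitz_on_bounded_congr f g : f =1 g ->
  lipschitz_on_bounded f -> lipschitz_on_bounded g.
Proof. by move=> /funext <-. Qed.

Lemma lipschitz_on_bounded_bounded f : lipschitz_on_bounded f ->
  forall r, exists C, 0 <= C /\ forall y, frob y <= r -> `|f y| <= C.
Proof.
move=> Hf r; have [K [K_ge0 HK]] := Hf r.
exists (K * `|r| + `|f 0|); split=> [|y yr]; first by rewrite addr_ge0 ?mulr_ge0.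
have r_ge0 : 0 <= r := le_trans (frob_ge0 y) yr.
have frob0 : frob (0 : M) = 0 by rewrite -(scale0r (0 : M)) frobZ normr0 mul0r.
have := HK y 0 yr; rewrite frob0 subr0 => /(_ r_ge0) fy.
have := ler_wpM2l K_ge0 yr; have := ler_normD (f y - f 0) (f 0).
rewrite subrK (ger0_norm r_ge0); lra.
Qed.

Lemma lipschitz_on_bounded_cst (a : R) : lipschitz_on_bounded (fun=> a).
Proof. by move=> r; exists 0; split=> // y z _ _; rewrite subrr normr0 mul0r. Qed.

Lemma lipschitz_on_bounded_entry i j : lipschitz_on_bounded (fun X : M => X i j).
Proof.
move=> r; exists 1; split=> // y z _ _; rewrite mul1r.
by have := norm_entry_le_frob (y - z) i j; rewrite !mxE.
Qed.

Lemma lipschitz_on_boundedD f g : lipschitz_on_bounded f -> lipschitz_on_bounded g ->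
  lipschitz_on_bounded (f \+ g).
Proof.
move=> Hf Hg r; have [K1 [K1_ge0 H1]] := Hf r; have [K2 [K2_ge0 H2]] := Hg r.
exists (K1 + K2); split=> [|y z yr zr]; first exact: addr_ge0.
have := H1 y z yr zr; have := H2 y z yr zr.
have := ler_normD (f y - f z) (g y - g z).
rewrite /= (_ : f y + g y - (f z + g z) = f y - f z + (g y - g z)); first lra.
by rewrite opprD addrACA.
Qed.

Lemma lipschitz_on_boundedN f : lipschitz_on_bounded f ->
  lipschitz_on_bounded (fun x => - f x).
Proof.
move=> Hf r; have [K [K_ge0 HK]] := Hf r; exists K; split=> // y z yr zr.
by rewrite -opprD normrN HK.
Qed.

Lemma lipschitz_on_boundedM f g : lipschitz_on_bounded f -> lipschitz_on_bounded g ->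
  lipschitz_on_bounded (f \* g).
Proof.
move=> Hf Hg r; have [K1 [K1_ge0 H1]] := Hf r; have [K2 [K2_ge0 H2]] := Hg r.
have [C1 [C1_ge0 B1]] := lipschitz_on_bounded_bounded Hf r.
have [C2 [C2_ge0 B2]] := lipschitz_on_bounded_bounded Hg r.
exists (C1 * K2 + C2 * K1); split=> [|y z yr zr]; first by rewrite addr_ge0 ?mulr_ge0.
have -> : f y * g y - f z * g z = f y * (g y - g z) + g z * (f y - f z) by ring.
apply: le_trans (ler_normD _ _) _; rewrite !normrM mulrDl -!mulrA.
by apply: lerD; apply: ler_pM => //; [exact: B1|exact: H2|exact: B2|exact: H1].
Qed.

Lemma lipschitz_on_bounded_sum n (F : 'I_n -> M -> R) :
  (forall i, lipschitz_on_bounded (F i)) ->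
  lipschitz_on_bounded (fun x => \sum_(i < n) F i x).
Proof.
elim: n F => [|n IH] F HF.
  by apply: lipschitz_on_bounded_congr (lipschitz_on_bounded_cst 0) => x; rewrite big_ord0.
apply: lipschitz_on_bounded_congr (lipschitz_on_boundedD (HF ord0) (IH _ (fun i => HF (lift ord0 i)))).
by move=> x; rewrite big_ord_recl.
Qed.

Lemma lipschitz_on_boundedV f : lipschitz_on_bounded f -> (forall x, 1 <= f x) ->
  lipschitz_on_bounded (fun x => (f x)^-1).
Proof.
move=> Hf f_ge1 r; have [K [K_ge0 HK]] := Hf r; exists K; split=> // y z yr zr.
have fy_gt0 : 0 < f y := lt_le_trans ltr01 (f_ge1 y).
have fz_gt0 : 0 < f z := lt_le_trans ltr01 (f_ge1 z).
have -> : (f y)^-1 - (f z)^-1 = (f z - f y) / (f y * f z).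
  by field; rewrite !gt_eqF.
rewrite normrM normfV (gtr0_norm (mulr_gt0 fy_gt0 fz_gt0)) distrC.
apply: le_trans (HK y z yr zr).
rewrite ler_pdivrMr ?mulr_gt0 // ler_peMr //.
by have := f_ge1 y; have := f_ge1 z; nra.
Qed.

Lemma lipschitz_on_bounded_sqrt f : lipschitz_on_bounded f -> (forall x, 1 <= f x) ->
  lipschitz_on_bounded (fun x => Num.sqrt (f x)).
Proof.
move=> Hf f_ge1 r; have [K [K_ge0 HK]] := Hf r; exists K; split=> // y z yr zr.
apply: le_trans (HK y z yr zr).
have sfy : 1 <= Num.sqrt (f y) by rewrite -sqrtr1 ler_wsqrtr.
have sfz : 1 <= Num.sqrt (f z) by rewrite -sqrtr1 ler_wsqrtr.
have -> : f y - f z = (Num.sqrt (f y) - Num.sqrt (f z)) * (Num.sqrt (f y) + Num.sqrt (f z)).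
  by rewrite -subr_sqr !sqr_sqrtr // (le_trans ler01).
rewrite normrM (ger0_norm (addr_ge0 (le_trans ler01 sfy) (le_trans ler01 sfz))).
by rewrite ler_peMr //; lra.
Qed.

Lemma lipschitz_on_bounded_mx_cst m n (A : 'M[R]_(m, n)) :
  lipschitz_on_bounded_mx (fun=> A).
Proof. by move=> i j; exact: lipschitz_on_bounded_cst. Qed.

Lemma lipschitz_on_bounded_mx_id : lipschitz_on_bounded_mx (@id M).
Proof. exact: lipschitz_on_bounded_entry. Qed.

Lemma lipschitz_on_bounded_mxD m n (F G : M -> 'M[R]_(m, n)) :
  lipschitz_on_bounded_mx F -> lipschitz_on_bounded_mx G ->
  lipschitz_on_bounded_mx (F \+ G).
Proof.
move=> HF HG i j; apply: lipschitz_on_bounded_congr (lipschitz_on_boundedD (HF i j) (HG i j)).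
by move=> x; rewrite /= mxE.
Qed.

Lemma lipschitz_on_bounded_trmx m n (F : M -> 'M[R]_(m, n)) :
  lipschitz_on_bounded_mx F -> lipschitz_on_bounded_mx (fun x => (F x)^T).
Proof.
by move=> HF i j; apply: lipschitz_on_bounded_congr (HF j i) => x; rewrite mxE.
Qed.

Lemma lipschitz_on_bounded_mulmx m n p (F : M -> 'M[R]_(m, n)) (G : M -> 'M[R]_(n, p)) :
  lipschitz_on_bounded_mx F -> lipschitz_on_bounded_mx G ->
  lipschitz_on_bounded_mx (fun x => F x *m G x).
Proof.
move=> HF HG i j; apply: lipschitz_on_bounded_congr
  (lipschitz_on_bounded_sum (fun k => lipschitz_on_boundedM (HF i k) (HG k j))).
by move=> x; rewrite mxE.
Qed.

Lemma lipschitz_on_bounded_mxZ m n f (F : M -> 'M[R]_(m, n)) :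
  lipschitz_on_bounded f -> lipschitz_on_bounded_mx F ->
  lipschitz_on_bounded_mx (fun x => f x *: F x).
Proof.
move=> Hf HF i j; apply: lipschitz_on_bounded_congr (lipschitz_on_boundedM Hf (HF i j)).
by move=> x; rewrite mxE.
Qed.

Lemma lipschitz_on_bounded_frob_dot (F G : M -> M) :
  lipschitz_on_bounded_mx F -> lipschitz_on_bounded_mx G ->
  lipschitz_on_bounded (fun x => frob_dot (F x) (G x)).
Proof.
move=> HF HG; apply: lipschitz_on_bounded_sum => i.
by apply: lipschitz_on_bounded_sum => j; exact: lipschitz_on_boundedM.
Qed.

Lemma hess_locally_lipschitz_of_lipschitz_on_bounded (f : M -> R) :
  (forall i j k l, lipschitz_on_bounded (fun y => hess f y i j k l)) ->
  hess_locally_lipschitz f.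
Proof.
move=> Hf x.
have [K HK] := choice (fun p : 'I_3 * 'I_3 * ('I_3 * 'I_3) =>
  Hf p.1.1 p.1.2 p.2.1 p.2.2 (frob x + 1)).
exists 1, (\sum_p K p); split=> // y z yx zx i j k l.
have near_x w : frob (w - x) < 1 -> frob w <= frob x + 1.
  move=> wx; have := frobD x (w - x); rewrite addrC subrK => /le_trans; apply.
  by rewrite lerD2l ltW.
have [_ HKp] := HK (i, j, (k, l)).
apply: le_trans (HKp y z (near_x y yx) (near_x z zx)) _.
rewrite ler_wpM2r ?frob_ge0 // (bigD1 (i, j, (k, l))) //= lerDl.
by apply: sumr_ge0 => p _; have [] := HK p.
Qed.

End LipschitzOnBounded.

Section GramDefect.
Variable R : realType.
Local Notation M := 'M[R]_3.
Implicit Types X V : M.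

Definition gram_defect X : M := X^T *m X - 1%:M.

Definition gram_defect_deriv X V : M := V^T *m X + X^T *m V.

Lemma has_derivative_gram_defect : has_derivative_mx gram_defect gram_defect_deriv.
Proof.
have Hid := @has_derivative_mx_id R 3 3.
have := has_derivative_mxD (has_derivative_mulmx (has_derivative_trmx Hid) Hid)
  (has_derivative_mx_cst (- 1%:M)).
by apply: has_derivative_mx_congr => // X V; rewrite addr0.
Qed.

Lemma frob_dot_gram_defect_deriv X V :
  frob_dot (gram_defect X) (gram_defect_deriv X V) = 2 * frob_dot (X *m gram_defect X) V.
Proof.
have E_sym : (gram_defect X)^T = gram_defect X.
  by rewrite /gram_defect linearB /= trmx_mul trmxK trmx1.
rewrite frob_dotDr !frob_dot_mulmx.
have -> : frob_dot (V *m gram_defect X) X = frob_dot (X *m gram_defect X) V.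
  rewrite !frob_dot_trace -mxtrace_tr !trmx_mul !trmxK E_sym mulmxA mxtrace_mulC.
  by rewrite mulmxA.
by rewrite mulr2n mulrDl mul1r.
Qed.

Lemma frob_sqr_le_gram_defect X : frob X ^+ 2 <= 3 + 3 * frob (gram_defect X).
Proof.
rewrite frob_sqr frob_dot_trace -(subrK 1%:M (X^T *m X)) mxtraceD mxtrace1 addrC lerD2l.
rewrite -/(gram_defect X) /mxtrace (@le_trans _ _ (\sum_(i < 3) frob (gram_defect X))) //.
  by apply: ler_sum => i _; exact: le_trans (ler_norm _) (norm_entry_le_frob _ i i).
by rewrite sumr_const card_ord mulr_natl.
Qed.

Lemma frob_gram_defect_deriv_le X V : frob (gram_defect_deriv X V) <= 2 * frob X * frob V.
Proof.
apply: le_trans (frobD _ _) _.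
have := frob_mulmx V^T X; have := frob_mulmx X^T V; rewrite !frob_tr.
by have := frob_ge0 X; have := frob_ge0 V; nra.
Qed.

Lemma lipschitz_on_bounded_gram_defect : lipschitz_on_bounded_mx gram_defect.
Proof.
have Hid := @lipschitz_on_bounded_mx_id R.
exact: lipschitz_on_bounded_mxD
  (lipschitz_on_bounded_mulmx (lipschitz_on_bounded_trmx Hid) Hid) (lipschitz_on_bounded_mx_cst _).
Qed.

Lemma lipschitz_on_bounded_gram_defect_deriv V :
  lipschitz_on_bounded_mx (gram_defect_deriv ^~ V).
Proof.
have Hid := @lipschitz_on_bounded_mx_id R.
exact: lipschitz_on_bounded_mxD
  (lipschitz_on_bounded_mulmx (lipschitz_on_bounded_mx_cst _) Hid)
  (lipschitz_on_bounded_mulmx (lipschitz_on_bounded_trmx Hid) (lipschitz_on_bounded_mx_cst _)).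
Qed.

End GramDefect.

(* With [e = |X^T X - 1|], [z = |X|], [n = |V|] and [a = 1 / sqrt (3 L^2 e^2 + 1)],
   the left-hand side is the triangle-inequality bound on [|hbar_hess X V|]. *)
Lemma hess_poly_bound (R : realFieldType) (L e z n a : R) :
  0 < L -> 0 <= e -> 0 <= n -> 0 < a -> a <= 1 ->
  3 * L ^+ 2 * e ^+ 2 * a ^+ 2 <= 1 -> z ^+ 2 <= 3 + 3 * e ->
  6 * L ^+ 3 * (a ^+ 2 * (3 * L ^+ 2 * (e * (2 * z * n)) * a) * (z * e)
                + a * (n * e + z * (2 * z * n)))
  <= (72 * L ^+ 3 + 78 * L ^+ 2) * n.
Proof.
move=> L_gt0 e_ge0 n_ge0 a_gt0 a_le1 Lea z2_le.
have Lea_le1 : L * e * a <= 1.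
  by have := sqr_ge0 (L * e * a - 1); nra.
have inner : 6 * L ^+ 2 * e ^+ 2 * a ^+ 2 * z ^+ 2 + e + 2 * z ^+ 2 <= 12 + 13 * e.
  by have := sqr_ge0 z; nra.
have P_ge0 : 0 <= 6 * L ^+ 3 * n * a by rewrite !mulr_ge0 // ltW.
have -> : 6 * L ^+ 3 * (a ^+ 2 * (3 * L ^+ 2 * (e * (2 * z * n)) * a) * (z * e)
                        + a * (n * e + z * (2 * z * n)))
  = 6 * L ^+ 3 * n * a * (6 * L ^+ 2 * e ^+ 2 * a ^+ 2 * z ^+ 2 + e + 2 * z ^+ 2) by ring.
apply: le_trans (ler_wpM2l P_ge0 inner) _.
have L2n_ge0 : 0 <= L ^+ 2 * n by rewrite !mulr_ge0 // ltW.
have := ler_wpM2l L2n_ge0 Lea_le1; have := ler_wpM2l (mulr_ge0 (ltW L_gt0) L2n_ge0) a_le1.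
lra.
Qed.

Section Hbar.
Variable R : realType.
Local Notation M := 'M[R]_3.
Implicit Types X V : M.
Variable L2 : R.

Definition hbar_sqrt X := Num.sqrt (3 * L2 ^+ 2 * frob (gram_defect X) ^+ 2 + 1).

Lemma hbar_sqrt_ge1 X : 1 <= hbar_sqrt X.
Proof. by rewrite -{1}sqrtr1 ler_wsqrtr // lerDr mulr_ge0 ?sqr_ge0 // mulr_ge0 ?sqr_ge0. Qed.

Lemma hbar_sqrt_gt0 X : 0 < hbar_sqrt X.
Proof. exact: lt_le_trans ltr01 (hbar_sqrt_ge1 X). Qed.

Lemma hbar_sqrt_sqr X : hbar_sqrt X ^+ 2 = 3 * L2 ^+ 2 * frob (gram_defect X) ^+ 2 + 1.
Proof.
by rewrite sqr_sqrtr // addr_ge0 // mulr_ge0 ?sqr_ge0 // mulr_ge0 ?sqr_ge0.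
Qed.

Definition hbar_sqrt_deriv X V :=
  3 * L2 ^+ 2 * frob_dot (gram_defect X) (gram_defect_deriv X V) / hbar_sqrt X.

Lemma has_derivative_hbar_sqrt : has_derivative hbar_sqrt hbar_sqrt_deriv.
Proof.
have dE := @has_derivative_gram_defect R.
have arg_gt0 X : 0 < 3 * L2 ^+ 2 * frob_dot (gram_defect X) (gram_defect X) + 1.
  by rewrite -frob_sqr ltr_wpDl // mulr_ge0 ?sqr_ge0 // mulr_ge0 ?sqr_ge0.
have := has_derivative_sqrt (has_derivativeD
  (has_derivativeZ (3 * L2 ^+ 2) (has_derivative_frob_dot dE dE)) (has_derivative_cst 1)) arg_gt0.
apply: has_derivative_congr => [X|X V]; rewrite /= -frob_sqr //.
rewrite /hbar_sqrt_deriv -/(hbar_sqrt X) addr0 (frob_dotC (gram_defect_deriv _ _)).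
by field; rewrite gt_eqF // hbar_sqrt_gt0.
Qed.

Definition hbar_grad X : M := (6 * L2 ^+ 3 / hbar_sqrt X) *: (X *m gram_defect X).

Lemma has_derivative_hbar : has_derivative (hbar L2) (fun X V => frob_dot (hbar_grad X) V).
Proof.
have := has_derivativeD (has_derivativeZ L2 has_derivative_hbar_sqrt) (has_derivative_cst (- L2)).
apply: has_derivative_congr => // X V.
rewrite addr0 frob_dotZl /hbar_sqrt_deriv frob_dot_gram_defect_deriv.
by field; rewrite gt_eqF // hbar_sqrt_gt0.
Qed.

Definition hbar_hess X V : M := 6 * L2 ^+ 3 *:
  ((- (hbar_sqrt X) ^- 2 * hbar_sqrt_deriv X V) *: (X *m gram_defect X)
   + (hbar_sqrt X)^-1 *: (V *m gram_defect X + X *m gram_defect_deriv X V)).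

Lemma has_derivative_hbar_grad : has_derivative_mx hbar_grad hbar_hess.
Proof.
have hbar_sqrt_neq0 X : hbar_sqrt X != 0 by rewrite gt_eqF // hbar_sqrt_gt0.
have := has_derivative_mxZ
  (has_derivativeZ (6 * L2 ^+ 3) (has_derivativeV has_derivative_hbar_sqrt hbar_sqrt_neq0))
  (has_derivative_mulmx (@has_derivative_mx_id R 3 3) (@has_derivative_gram_defect R)).
by apply: has_derivative_mx_congr => // X V; rewrite /hbar_hess [RHS]scalerDr !scalerA.
Qed.

Lemma grad_hbar : grad (hbar L2) = hbar_grad.
Proof. exact: grad_frob_dot has_derivative_hbar. Qed.

Lemma hess_hbar X i j k l : hess (hbar L2) X i j k l = hbar_hess X (delta_mx k l) i j.
Proof. by rewrite /hess grad_hbar; have [_ ->] := has_derivative_hbar_grad i j X. Qed.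

Lemma lipschitz_on_bounded_hbar_sqrt : lipschitz_on_bounded hbar_sqrt.
Proof.
have HE := @lipschitz_on_bounded_gram_defect R.
apply: lipschitz_on_bounded_sqrt; last by move=> X; rewrite -hbar_sqrt_sqr exprn_ege1 ?hbar_sqrt_ge1.
apply: lipschitz_on_bounded_congr (lipschitz_on_boundedD
  (lipschitz_on_boundedM (lipschitz_on_bounded_cst (3 * L2 ^+ 2))
    (lipschitz_on_bounded_frob_dot HE HE)) (lipschitz_on_bounded_cst 1)).
by move=> X; rewrite /= frob_sqr.
Qed.

Lemma lipschitz_on_bounded_hbar_hess V : lipschitz_on_bounded_mx (hbar_hess ^~ V).
Proof.
have HE := @lipschitz_on_bounded_gram_defect R.
have HdE := @lipschitz_on_bounded_gram_defect_deriv R V.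
have Hid := @lipschitz_on_bounded_mx_id R.
have HV := lipschitz_on_boundedV lipschitz_on_bounded_hbar_sqrt hbar_sqrt_ge1.
have HV2 : lipschitz_on_bounded (fun X => (hbar_sqrt X) ^- 2).
  apply: lipschitz_on_boundedV; last by move=> X; rewrite exprn_ege1 ?hbar_sqrt_ge1.
  exact: lipschitz_on_boundedM lipschitz_on_bounded_hbar_sqrt lipschitz_on_bounded_hbar_sqrt.
have Hderiv : lipschitz_on_bounded (hbar_sqrt_deriv ^~ V).
  exact: lipschitz_on_boundedM (lipschitz_on_boundedM (lipschitz_on_bounded_cst _)
    (lipschitz_on_bounded_frob_dot HE HdE)) HV.
exact: lipschitz_on_bounded_mxZ (lipschitz_on_bounded_cst _) (lipschitz_on_bounded_mxD
  (lipschitz_on_bounded_mxZ (lipschitz_on_boundedM (lipschitz_on_boundedN HV2) Hderiv)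
    (lipschitz_on_bounded_mulmx Hid HE))
  (lipschitz_on_bounded_mxZ HV (lipschitz_on_bounded_mxD
    (lipschitz_on_bounded_mulmx (lipschitz_on_bounded_mx_cst V) HE)
    (lipschitz_on_bounded_mulmx Hid HdE)))).
Qed.

Lemma hess_locally_lipschitz_hbar : hess_locally_lipschitz (hbar L2).
Proof.
apply: hess_locally_lipschitz_of_lipschitz_on_bounded => i j k l.
apply: lipschitz_on_bounded_congr (lipschitz_on_bounded_hbar_hess (delta_mx k l) i j).
by move=> X; rewrite hess_hbar.
Qed.

Hypothesis L2_gt0 : 0 < L2.

Lemma frob_hbar_hess_le X V :
  frob (hbar_hess X V) <= (72 * L2 ^+ 3 + 78 * L2 ^+ 2) * frob V.
Proof.
set a := (hbar_sqrt X)^-1; set e := frob (gram_defect X); set z := frob X; set n := frob V.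
have a_gt0 : 0 < a by rewrite invr_gt0 hbar_sqrt_gt0.
have k_ge0 : 0 <= 6 * L2 ^+ 3 by rewrite mulr_ge0 // exprn_ge0 // ltW.
have dE_le : frob (gram_defect_deriv X V) <= 2 * z * n := frob_gram_defect_deriv_le X V.
have a_le1 : a <= 1 by rewrite invr_le1 ?hbar_sqrt_ge1 ?unitfE ?gt_eqF ?hbar_sqrt_gt0.
have Lea : 3 * L2 ^+ 2 * e ^+ 2 * a ^+ 2 <= 1.
  by rewrite /a exprVn ler_pdivrMr ?exprn_gt0 ?hbar_sqrt_gt0 // mul1r hbar_sqrt_sqr lerDl.
apply: le_trans (hess_poly_bound L2_gt0 (frob_ge0 _) (frob_ge0 V) a_gt0 a_le1 Lea
  (frob_sqr_le_gram_defect X)).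
rewrite -/e -/z -/n.
have hbar_sqrt_deriv_le : `|hbar_sqrt_deriv X V| <= 3 * L2 ^+ 2 * (e * (2 * z * n)) * a.
  have c_ge0 : 0 <= 3 * L2 ^+ 2 by rewrite mulr_ge0 ?sqr_ge0.
  rewrite /hbar_sqrt_deriv -/a normrM (gtr0_norm a_gt0) normrM (ger0_norm c_ge0).
  apply: (ler_wpM2r (ltW a_gt0)); apply: (ler_wpM2l c_ge0).
  exact: le_trans (norm_frob_dot_le _ _) (ler_wpM2l (frob_ge0 _) dE_le).
rewrite /hbar_hess frobZ (ger0_norm k_ge0) ler_wpM2l //.
apply: le_trans (frobD _ _) _; rewrite !frobZ; apply: lerD.
  have a2_ge0 := exprn_ge0 2 (ltW a_gt0).
  rewrite normrM normrN -exprVn -/a (ger0_norm a2_ge0).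
  exact: ler_pM (mulr_ge0 a2_ge0 (normr_ge0 _)) (frob_ge0 _)
    (ler_wpM2l a2_ge0 hbar_sqrt_deriv_le) (frob_mulmx _ _).
rewrite (gtr0_norm a_gt0); apply: (ler_wpM2l (ltW a_gt0)).
apply: le_trans (frobD _ _) _; apply: lerD; first exact: frob_mulmx.
exact: le_trans (frob_mulmx _ _) (ler_wpM2l (frob_ge0 _) dE_le).
Qed.

End Hbar.

Section Gfun.
Variables (R : realType) (L2 : R).

Lemma ler_gfun_norm x y : 0 <= L2 -> `|x| <= `|y| -> gfun L2 x <= gfun L2 y.
Proof.
move=> L2_ge0 xy; rewrite lerD2r ler_wpM2l // ler_wsqrtr // lerD2r.
rewrite ler_wpM2l ?mulr_ge0 ?sqr_ge0 // -(real_normK (num_real x)) -(real_normK (num_real y)).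
by rewrite ler_sqr ?nnegrE.
Qed.

Lemma gfun0 : gfun L2 0 = 0.
Proof. by rewrite /gfun expr0n mulr0 add0r sqrtr1 mulr1 subrr. Qed.

Lemma gfun_norm_inv x : 0 < L2 -> `|x| = L2^-1 -> gfun L2 x = L2.
Proof.
move=> L2_gt0 xL; rewrite /gfun -(real_normK (num_real x)) xL.
have -> : 3 * L2 ^+ 2 * L2^-1 ^+ 2 + 1 = 2 ^+ 2 by field; rewrite gt_eqF.
by rewrite sqrtr_sqr ger0_norm //; ring.
Qed.

End Gfun.

Theorem corollary2 (R : realType) :
  (exists q : {poly R}, forall L2 : R, 0 < L2 ->
      curvature_bounded q.[L2] (hbar L2)) /\
  (forall L2 : R, 0 < L2 ->
      twice_differentiable (hbar L2) /\
      hess_locally_lipschitz (hbar L2) /\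
      (forall x y : R, `|x| <= `|y| -> gfun L2 x <= gfun L2 y) /\
      (exists x0 : R, gfun L2 x0 = 0) /\ (forall x : R, 0 <= gfun L2 x) /\
      (forall x : R, `|x| = L2^-1 -> gfun L2 x = L2)).
Proof.
split.
  exists (72 *: 'X^3 + 78 *: 'X^2) => L2 L2_gt0.
  rewrite hornerD !hornerZ !hornerXn.
  apply: curvature_bounded_of_lipschitz_grad (has_derivative_hbar L2) _.
  exact: lipschitz_of_derivative_bound (has_derivative_hbar_grad L2) (frob_hbar_hess_le L2_gt0).
move=> L2 L2_gt0; split.
  split=> x; first by have [] := has_derivative_hbar L2 x.
  by rewrite grad_hbar; exact: has_derivative_mx_differentiable (has_derivative_hbar_grad L2).
split; first exact: hess_locally_lipschitz_hbar.
split; first by move=> x y; apply: ler_gfun_norm; exact: ltW.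
split; first by exists 0; exact: gfun0.
split=> x; last exact: gfun_norm_inv.
by rewrite -(gfun0 L2); apply: ler_gfun_norm; [exact: ltW|rewrite normr0].
Qed.
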